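(* Let $(X,d,f)$ be a TDS. If $\widetilde h_{top}(f,X)=h_{top}(f,X)$, then $$h_{top}(f,X)=\lim_{\varepsilon\to0}\lim_{\alpha\to0}h^\alpha_{top}(f,X,\varepsilon)=\sup_{\varepsilon>0}\inf_{\alpha>0}h^\alpha_{top}(f,X,\varepsilon).$$
   Context: A TDS $(X,d,f)$: compact metric space and continuous $f$; $h_{top}(f,X)$ is the classical topological entropy. $d_n^\alpha(x,y)=\max_{0\le i\le n-1}e^{\alpha i}d(f^ix,f^iy)$; $r_n(f,\alpha,X,\varepsilon)$ is the minimal cardinality of a set $E$ such that every $x\in X$ has $y\in E$ with $d_n^\alpha(x,y)<\varepsilon$; $h^\alpha_{top}(f,X,\varepsilon)=\limsup_{n\to\infty}\frac1n\log r_n(f,\alpha,X,\varepsilon)$. Neutralized topological entropy: $B_n(x,r)=\{y:d(f^jx,f^jy)<r,\ 0\le j\le n-1\}$; $r_n(X,e^{-n\varepsilon})$ is the smallest number of balls $B_n(x,e^{-n\varepsilon})$ needed to cover $X$; $\widetilde h_{top}(f,X,\varepsilon)=\limsup_{n\to\infty}\frac1n\log r_n(X,e^{-n\varepsilon})$ and $\widetilde h_{top}(f,X)=\lim_{\varepsilon\to0}\widetilde h_{top}(f,X,\varepsilon)$. *)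

From HB Require Import structures.
From mathcomp Require Import all_boot all_order all_algebra.
From mathcomp Require Import all_classical all_reals all_analysis.
Set Implicit Arguments. Unset Strict Implicit. Unset Printing Implicit Defensive.
Import Order.TTheory GRing.Theory Num.Theory.
Import numFieldNormedType.Exports.
Local Open Scope classical_set_scope.
Local Open Scope ring_scope.

Section Entropies.
Context {R : realType} {X : metricType R}.
Let d := @mdist R X.

(* d_n^alpha(x,y) = max_{0<=i<=n-1} e^{alpha i} d(f^i x, f^i y)
   (the empty max for n = 0 is 0) *)
Definition dist_alpha (f : X -> X) (alpha : R) (n : nat) (x y : X) : R :=
  \big[Num.max/0]_(i < n) (expR (alpha * i%:R) * d (iter i f x) (iter i f y)).

(* minimal cardinality of a set E such that every x has y in E with
   dn x y < r; +oo if no finite such set exists *)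
Definition min_span (dn : X -> X -> R) (r : R) : \bar R :=
  ereal_inf [set (size s)%:R%:E | s in
     [set s : seq X | forall x : X, exists2 y, y \in s & dn x y < r]].

Definition eln (x : \bar R) : \bar R :=
  match x with
  | r%:E => (ln r)%:E
  | +oo%E => +oo%E
  | -oo%E => -oo%E
  end.

Definition r_alpha (f : X -> X) (alpha : R) (n : nat) (eps : R) : \bar R :=
  min_span (dist_alpha f alpha n) eps.

Definition h_alpha (f : X -> X) (alpha eps : R) : \bar R :=
  limn_esup (fun n : nat => ((n%:R)^-1)%:E * eln (r_alpha f alpha n eps))%E.

(* classical topological entropy (Bowen spanning-set definition,
   Bowen metric d_n = d_n^0) : lim_{eps -> 0} limsup_n (1/n) log r_n(eps) *)
Definition h_top (f : X -> X) : \bar R :=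
  lim ((fun eps : R => h_alpha f 0 eps) @ 0^'+).

Definition bowen_ball (f : X -> X) (n : nat) (x : X) (r : R) : set X :=
  [set y | forall j : nat, (j < n)%N -> d (iter j f x) (iter j f y) < r].

Definition r_neutral (f : X -> X) (n : nat) (eps : R) : \bar R :=
  ereal_inf [set (size s)%:R%:E | s in
     [set s : seq X | forall y : X, exists2 x, x \in s &
                         bowen_ball f n x (expR (- (n%:R * eps))) y]].

Definition h_neutral_eps (f : X -> X) (eps : R) : \bar R :=
  limn_esup (fun n : nat => ((n%:R)^-1)%:E * eln (r_neutral f n eps))%E.

Definition h_neutral (f : X -> X) : \bar R :=
  lim ((fun eps : R => h_neutral_eps f eps) @ 0^'+).

End Entropies.

From HB Require Import structures.
From mathcomp Require Import all_boot all_order all_algebra.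
From mathcomp Require Import all_classical all_reals all_analysis.
From mathcomp Require Import ring lra.
Import Order.TTheory GRing.Theory Num.Theory.
Import numFieldNormedType.Exports.
Local Open Scope classical_set_scope.
Local Open Scope ring_scope.

(* All three entropies are monotone in their parameters, so the limits at
   [0^'+] exist and are the corresponding infima or suprema.  The comparison
   with the neutralized entropy: for [0 < a < a'] and [n > - ln eps / (a' - a)],
   [y] in the Bowen ball [B_n(x, e^{-n a'})] gives
   [e^{a i} d(f^i x, f^i y) < e^{-n (a' - a)} <= eps] for all [i < n], so
   [h^a(eps) <= h~(a')].  Hence
   [h_top = sup_eps h^0(eps) <= sup_eps inf_a h^a(eps) <= inf_a' h~(a') = h~],
   and the hypothesis [h~ = h_top] closes the chain. *)

Section limf_esup_monotone.
Context {T : choiceType} {Y : filteredType T} {R : realType}.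

Lemma le_limf_esup_near (F : set_system Y) (u v : Y -> \bar R) : Filter F ->
  (\forall x \near F, u x <= v x)%E -> (limf_esup u F <= limf_esup v F)%E.
Proof.
move=> FF uv; apply: le_ereal_inf_tmp => _ [V FV <-].
pose W := V `&` [set x | (u x <= v x)%E].
apply: (@le_trans _ _ (ereal_sup (u @` W))).
  by apply: ereal_inf_lbound; exists W => //; exact: filterI.
apply: ge_ereal_sup => _ [x [Vx uvx] <-]; apply: le_trans uvx _.
by apply: ereal_sup_ubound; exists x.
Qed.

End limf_esup_monotone.

Section monotone_at_right0.
Context {R : realType}.

Lemma positive_itvE : [set` `]0%R, +oo[] = [set a : R | 0 < a].
Proof. by apply/seteqP; split=> x /=; rewrite in_itv andbT. Qed.

Lemma nondecreasing_at_right0_cvge {g : R -> \bar R} :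
  {homo g : x y / x <= y >-> (x <= y)%E} ->
  g x @[x --> 0^'+] --> ereal_inf [set g a | a in [set a : R | 0 < a]].
Proof.
move=> ndg; rewrite -positive_itvE.
by apply: nondecreasing_at_right_cvge => // x y _ _; exact: ndg.
Qed.

Lemma nonincreasing_at_right0_cvge {g : R -> \bar R} :
  {homo g : x y / x <= y >-> (y <= x)%E} ->
  g x @[x --> 0^'+] --> ereal_sup [set g a | a in [set a : R | 0 < a]].
Proof.
move=> nig; rewrite -positive_itvE.
by apply: nonincreasing_at_right_cvge => // x y _ _; exact: nig.
Qed.

End monotone_at_right0.

Section growth_rate.
Context {R : realType} {T : Type}.

Definition min_card (P : set (seq T)) : \bar R :=
  ereal_inf [set (size s)%:R%:E | s in P].

Definition growth_rate (P : nat -> set (seq T)) : \bar R :=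
  limn_esup (fun n => ((n%:R)^-1)%:E * eln (min_card (P n)))%E.

Lemma le_min_card (P Q : set (seq T)) : Q `<=` P ->
  (min_card P <= min_card Q)%E.
Proof.
by move=> QP; apply: ereal_inf_le_tmp => _ [s Qs <-]; exists s => //; exact: QP.
Qed.

Lemma min_card_eq0_or_ge1 (P : set (seq T)) :
  min_card P = 0%E \/ (1 <= min_card P)%E.
Proof.
have [|lt1] := leP 1%E (min_card P); first by right.
left; have [_ [s Ps <-]] := ereal_inf_lt lt1.
rewrite lte_fin (_ : 1 = 1%:R)// ltr_nat ltnS leqn0 => /eqP s0.
apply/le_anti/andP; split; first by apply: ereal_inf_lbound; exists s; rewrite ?s0.
by apply: le_ereal_inf_tmp => _ [t _ <-]; rewrite lee_fin ler0n.
Qed.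

(* [ln 0 = 0], so [eln] is monotone only on values avoiding [(0, 1)], as the
   values of [min_card] do. *)
Lemma eln_le_eq0_or_ge1 (x y : \bar R) :
  x = 0%E \/ (1 <= x)%E -> y = 0%E \/ (1 <= y)%E ->
  (x <= y)%E -> (eln x <= eln y)%E.
Proof.
case=> [->|x1].
  case=> [->|y1] _; rewrite /= ln0 //.
  by case: y y1 => [r||] //= r1; rewrite ?leey // lee_fin ln_ge0 -?lee_fin.
move=> _ xy; have y1 := le_trans x1 xy.
case: x x1 xy => [r||] // r1; case: y y1 => [s||] //= s1; rewrite ?leey //.
have r0 : 0 < r by apply: lt_le_trans ltr01 _; rewrite -lee_fin.
have s0 : 0 < s by apply: lt_le_trans ltr01 _; rewrite -lee_fin.
by rewrite !lee_fin ler_ln ?posrE.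
Qed.

Lemma le_growth_rate_near (P Q : nat -> set (seq T)) :
  (\forall n \near \oo, Q n `<=` P n) -> (growth_rate P <= growth_rate Q)%E.
Proof.
move=> QP; apply: le_limf_esup_near; apply: filterS QP => n /le_min_card PQ.
apply: lee_wpmul2l; first by rewrite lee_fin invr_ge0 ler0n.
by apply: eln_le_eq0_or_ge1 => //; exact: min_card_eq0_or_ge1.
Qed.

End growth_rate.

Section entropy_comparison.
Context {R : realType} {X : metricType R} (f : X -> X).

Lemma dist_alpha_le {a b : R} {n x y} : a <= b ->
  dist_alpha f a n x y <= dist_alpha f b n x y.
Proof.
move=> ab; apply: (big_ind2 (fun u v => u <= v)) => // [*|i _].
  exact: le_max2.
apply: ler_wpM2r; first exact: mdist_ge0.
by rewrite ler_expR ler_wpM2r ?ler0n.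
Qed.

Lemma h_alpha_nondecreasing_alpha eps :
  {homo h_alpha f ^~ eps : a b / a <= b >-> (a <= b)%E}.
Proof.
move=> a b ab; apply: le_growth_rate_near; apply: nearW => n s sb x.
by have [y ys xy] := sb x; exists y => //; exact: le_lt_trans (dist_alpha_le ab) xy.
Qed.

Lemma h_alpha_nonincreasing_eps alpha :
  {homo h_alpha f alpha : e1 e2 / e1 <= e2 >-> (e2 <= e1)%E}.
Proof.
move=> e1 e2 e12; apply: le_growth_rate_near; apply: nearW => n s se x.
by have [y ys xy] := se x; exists y => //; exact: lt_le_trans xy e12.
Qed.

Lemma h_neutral_eps_nondecreasing :
  {homo h_neutral_eps f : e1 e2 / e1 <= e2 >-> (e1 <= e2)%E}.
Proof.
move=> e1 e2 e12; apply: le_growth_rate_near; apply: nearW => n s se y.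
have [x xs Bxy] := se y; exists x => // j jn; apply: lt_le_trans (Bxy j jn) _.
by rewrite ler_expR lerN2 ler_wpM2l ?ler0n.
Qed.

Lemma dist_alpha_lt_of_bowen_ball (a a' eps : R) n x y :
  0 < a -> a < a' -> 0 < eps -> - ln eps / (a' - a) < n%:R ->
  bowen_ball f n x (expR (- (n%:R * a'))) y -> dist_alpha f a n y x < eps.
Proof.
move=> a0 aa' eps0 nbig Bxy; have da : 0 < a' - a by rewrite subr_gt0.
have decay : expR (a * n%:R) * expR (- (n%:R * a')) <= eps.
  rewrite -expRD -[leRHS]lnK ?posrE // ler_expR.
  move: nbig; rewrite ltr_pdivrMr // => nbig.
  have -> : a * n%:R + - (n%:R * a') = - (n%:R * (a' - a)) by ring.
  by rewrite lerNl ltW.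
apply: (big_ind (fun v => v < eps)) => // [u v ue ve|i _].
  by rewrite gt_max ue ve.
apply: (@lt_le_trans _ _ (expR (a * i%:R) * expR (- (n%:R * a')))).
  by have := Bxy i (ltn_ord i); rewrite metric_sym ltr_pM2l ?expR_gt0.
apply: le_trans decay; apply: ler_wpM2r; first exact: ltW (expR_gt0 _).
by rewrite ler_expR ler_pM2l // ler_nat ltnW.
Qed.

Lemma h_alpha_le_h_neutral_eps (a a' eps : R) :
  0 < a -> a < a' -> 0 < eps -> (h_alpha f a eps <= h_neutral_eps f a')%E.
Proof.
move=> a0 aa' eps0; apply: le_growth_rate_near.
exists (Num.Def.truncn (- ln eps / (a' - a))).+1 => // n /= nbig s sB x.
have [y ys Byx] := sB x; exists y => //.
apply: dist_alpha_lt_of_bowen_ball Byx => //.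
by apply: lt_le_trans (truncnS_gt _) _; rewrite ler_nat.
Qed.

Definition h_alpha_inf (eps : R) : \bar R :=
  ereal_inf [set h_alpha f alpha eps | alpha in [set a : R | 0 < a]].

Lemma h_alpha_cvg_h_alpha_inf eps :
  h_alpha f alpha eps @[alpha --> 0^'+] --> h_alpha_inf eps.
Proof.
exact/nondecreasing_at_right0_cvge/h_alpha_nondecreasing_alpha.
Qed.

Lemma h_alpha_inf_nonincreasing :
  {homo h_alpha_inf : e1 e2 / e1 <= e2 >-> (e2 <= e1)%E}.
Proof.
move=> e1 e2 e12; apply: le_ereal_inf_tmp => _ [a a0 <-].
apply: le_trans (h_alpha_nonincreasing_eps a _ _ e12).
by apply: ereal_inf_lbound; exists a.
Qed.

Lemma h_top_le_sup_h_alpha_inf :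
  (h_top f <= ereal_sup [set h_alpha_inf eps | eps in [set e : R | (0 < e)%R]])%E.
Proof.
have h0 := nonincreasing_at_right0_cvge (h_alpha_nonincreasing_eps 0).
rewrite /h_top (cvg_lim _ h0) //; apply: ge_ereal_sup => _ [e e0 <-].
apply: (@le_trans _ _ (h_alpha_inf e)); last by apply: ereal_sup_ubound; exists e.
apply: le_ereal_inf_tmp => _ [a a0 <-].
exact: h_alpha_nondecreasing_alpha _ _ _ (ltW a0).
Qed.

Lemma sup_h_alpha_inf_le_h_neutral :
  (ereal_sup [set h_alpha_inf eps | eps in [set e : R | (0 < e)%R]] <= h_neutral f)%E.
Proof.
have hn := nondecreasing_at_right0_cvge h_neutral_eps_nondecreasing.
rewrite /h_neutral (cvg_lim _ hn) //; apply: ge_ereal_sup => _ [e e0 <-].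
apply: le_ereal_inf_tmp => _ [a' a'0 <-].
apply: (@le_trans _ _ (h_alpha f (a' / 2) e)).
  by apply: ereal_inf_lbound; exists (a' / 2) => //=; rewrite divr_gt0.
by move: a'0 => /= a'0; apply: h_alpha_le_h_neutral_eps => //; lra.
Qed.

End entropy_comparison.

Theorem mainTheorem14 (R : realType) (X : metricType R) (f : X -> X) :
  compact [set: X] -> continuous f ->
  h_neutral f = h_top f ->
  [/\ (forall eps : R, 0 < eps ->
         cvg ((fun alpha : R => h_alpha f alpha eps) @ 0^'+)),
      (fun eps : R => lim ((fun alpha : R => h_alpha f alpha eps) @ 0^'+))
         @ 0^'+ --> h_top f
    & h_top f = ereal_sup [set ereal_inf [set h_alpha f alpha eps | alpha in
                                           [set a : R | 0 < a]]
                          | eps in [set e : R | 0 < e]]].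
Proof.
move=> _ _ neutral_top.
have top_sup : h_top f = ereal_sup [set h_alpha_inf f e | e in [set e : R | 0 < e]].
  apply/le_anti; rewrite h_top_le_sup_h_alpha_inf -[leRHS]neutral_top.
  exact: sup_h_alpha_inf_le_h_neutral.
split=> [e _||//].
  by apply/cvg_ex; eexists; exact: h_alpha_cvg_h_alpha_inf.
rewrite top_sup; apply: cvg_trans
  (nonincreasing_at_right0_cvge (@h_alpha_inf_nonincreasing _ _ f)).
apply: near_eq_cvg; near=> e.
by apply/esym/cvg_lim => //; exact: h_alpha_cvg_h_alpha_inf.
Unshelve. all: by end_near.
Qed.
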